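(* Let $\mathbf A=(A;\cdot,\to,\leadsto,1)$ be a pseudo-hoop and let $F\subseteq A$ be a filter that has a least element. Then $F$ is a normal filter.
   Context: A pseudo-hoop is an algebra $(A;\cdot,\to,\leadsto,1)$ of type $\langle 2,2,2,0\rangle$ such that for all $x,y,z\in A$: $x\cdot 1=x=1\cdot x$; $x\to x=1=x\leadsto x$; $(x\cdot y)\to z=x\to(y\to z)$; $(x\cdot y)\leadsto z=y\leadsto(x\leadsto z)$; and $(x\to y)\cdot x=(y\to x)\cdot y=x\cdot(x\leadsto y)=y\cdot(y\leadsto x)$. Setting $x\le y$ iff $x\to y=1$ gives a partial order with greatest element $1$. A filter is a nonempty upward closed subset closed under $\cdot$. A filter $F$ is normal if for all $x,y\in A$: $x\to y\in F$ iff $x\leadsto y\in F$. *)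

Set Implicit Arguments.
Unset Strict Implicit.

(* Pseudo-hoop axioms for (A; mul, imp, limp, one):
   mul = ., imp = ->, limp = ~> (leadsto). *)
Record is_pseudo_hoop (A : Type) (mul imp limp : A -> A -> A) (one : A) : Prop := {
  ph_mul_1r : forall x, mul x one = x;
  ph_mul_1l : forall x, mul one x = x;
  ph_imp_refl : forall x, imp x x = one;
  ph_limp_refl : forall x, limp x x = one;
  ph_imp_mul : forall x y z, imp (mul x y) z = imp x (imp y z);
  ph_limp_mul : forall x y z, limp (mul x y) z = limp y (limp x z);
  ph_div1 : forall x y, mul (imp x y) x = mul (imp y x) y;
  ph_div2 : forall x y, mul (imp y x) y = mul x (limp x y);
  ph_div3 : forall x y, mul x (limp x y) = mul y (limp y x)
}.

Definition ph_le (A : Type) (imp : A -> A -> A) (one : A) (x y : A) : Prop :=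
  imp x y = one.

Definition is_filter (A : Type) (mul imp : A -> A -> A) (one : A) (F : A -> Prop) : Prop :=
  (exists x, F x) /\
  (forall x y, F x -> ph_le imp one x y -> F y) /\
  (forall x y, F x -> F y -> F (mul x y)).

Definition is_normal_filter (A : Type) (mul imp limp : A -> A -> A) (one : A)
    (F : A -> Prop) : Prop :=
  is_filter mul imp one F /\ (forall x y, F (imp x y) <-> F (limp x y)).

Definition has_least (A : Type) (imp : A -> A -> A) (one : A) (F : A -> Prop) : Prop :=
  exists a, F a /\ forall x, F x -> ph_le imp one a x.

From Stdlib Require Import Setoid.

(* The least element a of F is idempotent, and an idempotent of a pseudo-hoop
   is central: by divisibility both a x and x a equal (a x) a.  Membership in F
   means lying above a, and by residuation a <= x -> y iff a x <= y, while
   a <= x ~> y iff x a <= y; centrality of a makes the two conditions agree. *)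

Section PseudoHoop.

Context {A : Type} {mul imp limp : A -> A -> A} {one : A}.
Hypothesis HA : is_pseudo_hoop mul imp limp one.

Local Notation "x ≤ y" := (ph_le imp one x y) (at level 70).

Lemma ph_le_antisym x y : x ≤ y -> y ≤ x -> x = y.
Proof.
  unfold ph_le; intros Hxy Hyx.
  pose proof (ph_div1 HA x y) as E.
  now rewrite Hxy, Hyx, !(ph_mul_1l HA) in E.
Qed.

Lemma ph_imp_1l x : imp one x = x.
Proof.
  symmetry; apply ph_le_antisym; unfold ph_le.
  - now rewrite <- (ph_imp_mul HA), (ph_mul_1r HA), (ph_imp_refl HA).
  - rewrite <- (ph_mul_1r HA (imp one x)) at 1.
    now rewrite (ph_imp_mul HA), (ph_imp_refl HA).
Qed.

Lemma ph_le_1r x : x ≤ one.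
Proof.
  assert (E : mul (imp x one) x = x)
    by now rewrite (ph_div1 HA), ph_imp_1l, (ph_mul_1r HA).
  unfold ph_le; rewrite <- E at 1.
  now rewrite (ph_imp_mul HA), (ph_imp_refl HA).
Qed.

Lemma ph_limp_1r x : limp x one = one.
Proof.
  assert (E : mul x (limp x one) = x)
    by now rewrite <- (ph_div2 HA), ph_imp_1l, (ph_mul_1r HA).
  rewrite <- E at 1.
  now rewrite (ph_limp_mul HA), (ph_limp_refl HA).
Qed.

Lemma ph_mul_imp_of_le x y : x ≤ y -> mul (imp y x) y = x.
Proof.
  intro Hxy; now rewrite <- (ph_div1 HA), Hxy, (ph_mul_1l HA).
Qed.

Lemma ph_mul_limp_of_le x y : x ≤ y -> mul y (limp y x) = x.
Proof.
  intro Hxy; rewrite (ph_div3 HA), <- (ph_div2 HA).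
  now apply ph_mul_imp_of_le.
Qed.

Lemma ph_leE_limp x y : x ≤ y <-> limp x y = one.
Proof.
  split; intro H.
  - rewrite <- (ph_mul_limp_of_le _ _ H) at 1.
    now rewrite (ph_limp_mul HA), (ph_limp_refl HA), ph_limp_1r.
  - assert (E : mul (imp y x) y = x) by now rewrite (ph_div2 HA), H, (ph_mul_1r HA).
    unfold ph_le; rewrite <- E at 1.
    rewrite (ph_imp_mul HA), (ph_imp_refl HA); apply ph_le_1r.
Qed.

Lemma ph_mul_le_l x y : mul x y ≤ y.
Proof.
  unfold ph_le; rewrite (ph_imp_mul HA), (ph_imp_refl HA); apply ph_le_1r.
Qed.

Lemma ph_mul_le_r x y : mul x y ≤ x.
Proof.
  apply ph_leE_limp.
  now rewrite (ph_limp_mul HA), (ph_limp_refl HA), ph_limp_1r.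
Qed.

Lemma ph_mulA x y z : mul (mul x y) z = mul x (mul y z).
Proof.
  assert (E : forall t, imp (mul (mul x y) z) t = imp (mul x (mul y z)) t)
    by (intro t; now rewrite !(ph_imp_mul HA)).
  apply ph_le_antisym; unfold ph_le; [rewrite E | rewrite <- E]; apply (ph_imp_refl HA).
Qed.

Lemma ph_le_imp_mulE x y z : x ≤ imp y z <-> mul x y ≤ z.
Proof. unfold ph_le; now rewrite (ph_imp_mul HA). Qed.

Lemma ph_le_limp_mulE x y z : x ≤ limp y z <-> mul y x ≤ z.
Proof. now rewrite !ph_leE_limp, (ph_limp_mul HA). Qed.

Lemma ph_idempotent_comm a x : mul a a = a -> mul a x = mul x a.
Proof.
  intro Haa.
  transitivity (mul (mul a x) a).
  - assert (Eb : mul (imp a (mul a x)) a = mul a x)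
      by (apply ph_mul_imp_of_le, ph_mul_le_r).
    rewrite <- Eb at 1; rewrite <- Haa at 3.
    now rewrite <- ph_mulA, Eb.
  - assert (Ec : mul a (limp a (mul x a)) = mul x a)
      by (apply ph_mul_limp_of_le, ph_mul_le_l).
    rewrite <- Ec at 1; rewrite <- Haa at 3.
    now rewrite !ph_mulA, Ec.
Qed.

Lemma ph_le_imp_limp_of_comm a x y : mul a x = mul x a -> a ≤ imp x y <-> a ≤ limp x y.
Proof. intro Hax; now rewrite ph_le_imp_mulE, ph_le_limp_mulE, Hax. Qed.

Section LeastOfFilter.

Context {F : A -> Prop} {a : A}.
Hypothesis HF : is_filter mul imp one F.
Hypotheses (Fa : F a) (a_least : forall x, F x -> a ≤ x).

Lemma filter_memE x : F x <-> a ≤ x.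
Proof.
  destruct HF as [_ [F_up _]].
  split; [apply a_least | now apply F_up].
Qed.

Lemma filter_least_idem : mul a a = a.
Proof.
  destruct HF as [_ [_ F_mul]].
  apply ph_le_antisym; [apply ph_mul_le_l | now apply a_least, F_mul].
Qed.

End LeastOfFilter.

End PseudoHoop.

Theorem lemma4p5 (A : Type) (mul imp limp : A -> A -> A) (one : A)
  (HA : is_pseudo_hoop mul imp limp one) (F : A -> Prop)
  (HF : is_filter mul imp one F) (Hleast : has_least imp one F) :
  is_normal_filter mul imp limp one F.
Proof.
  destruct Hleast as [a [Fa a_least]].
  split; [exact HF |].
  intros x y.
  rewrite !(filter_memE HF Fa a_least).
  apply (ph_le_imp_limp_of_comm HA), (ph_idempotent_comm HA).
  exact (filter_least_idem HA HF Fa a_least).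
Qed.
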